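(* The group $G$ has exactly three orbits on the points of $\Pi$, namely $\{N\}$, $\mathcal Q$, and $\Pi\setminus(\mathcal Q\cup\{N\})$.
   Context: Let $q$ be an even prime power and $\mathrm{PG}(5,q^2)$ have homogeneous coordinates $(X_1,\dots,X_6)$, points written as column vectors. Let $\Sigma$ be the set of points having a coordinate vector $(\alpha,\alpha^q,\delta_0,\beta,\beta^q,\delta_1)$ with $\alpha,\beta\in\mathbb F_{q^2}$, $\delta_0,\delta_1\in\mathbb F_q$ (a Baer subgeometry $\cong\mathrm{PG}(5,q)$). Let $\Pi=\Sigma\cap\{X_6=0\}$, $\mathcal Q=\Sigma\cap\{X_6=0,\ X_3^2+X_1X_5+X_2X_4=0\}$ (a parabolic quadric $\mathcal Q(4,q)$ of $\Pi$) with nucleus $N=(0,0,1,0,0,0)$. Fix $\omega\in\mathbb F_{q^2}\setminus\mathbb F_q$ with $\omega+\omega^q=1$. For $a,b,c,d\in\mathbb F_{q^2}$ with $ad+bc=1$ let $M_{a,b,c,d}$ be the $6\times6$ matrix with rows $(a^2,0,0,0,c^2,\tfrac{c(a+c\omega^q)}{\omega})$, $(0,a^{2q},0,c^{2q},0,\tfrac{c^q(a^q+c^q\omega)}{\omega^q})$, $(ab,a^qb^q,1,c^qd^q,cd,\tfrac{d(a+c\omega^q)}{\omega}+\tfrac{d^q(a^q+c^q\omega)}{\omega^q}+\tfrac{1}{\omega^{q+1}})$, $(0,b^{2q},0,d^{2q},0,\tfrac{d^q(b^q+d^q\omega)+\omega}{\omega^q})$, $(b^2,0,0,0,d^2,\tfrac{d(b+d\omega^q)+\omega^q}{\omega})$,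 $(0,0,0,0,0,1)$, and let $G\cong\mathrm{PSL}(2,q^2)$ be the group of projectivities $X\mapsto M_{a,b,c,d}X$; $G$ stabilizes $\Sigma$, $\Pi$, $\mathcal Q$ and $N$. *)

From HB Require Import structures.
From mathcomp Require Import all_boot all_order all_algebra all_field.
Set Implicit Arguments. Unset Strict Implicit. Unset Printing Implicit Defensive.
Import GRing.Theory.
Local Open Scope ring_scope.

Section Defs.
Variables (F : finFieldType) (q : nat) (w : F).

(* Coordinate vectors of PG(5,q^2): column vectors of length 6;
   coordinate X_{k+1} is x (k : 'I_6) 0. *)
Definition vec6 (l : seq F) : 'cV[F]_6 := \col_(i < 6) nth 0 l i.

Definition peq (x y : 'cV[F]_6) : Prop := exists k : F, k != 0 /\ y = k *: x.

Definition inFq (d : F) : Prop := d ^+ q = d.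

Definition inSigma (x : 'cV[F]_6) : Prop :=
  x != 0 /\ exists a b d0 d1 : F, inFq d0 /\ inFq d1 /\
    peq x (vec6 [:: a; a ^+ q; d0; b; b ^+ q; d1]).

Definition inPi (x : 'cV[F]_6) : Prop := inSigma x /\ x 5%:R 0 = 0.

Definition inQ (x : 'cV[F]_6) : Prop :=
  inPi x /\ (x 2%:R 0) ^+ 2 + x 0 0 * x 4%:R 0 + x 1 0 * x 3%:R 0 = 0.

Definition Npt : 'cV[F]_6 := vec6 [:: 0; 0; 1; 0; 0; 0].

Definition wq := w ^+ q.

Definition Mabcd (a b c d : F) : 'M[F]_6 :=
  \matrix_(i < 6, j < 6) nth 0 (nth [::] [::
    [:: a ^+ 2; 0; 0; 0; c ^+ 2; c * (a + c * wq) / w];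
    [:: 0; a ^+ (2 * q); 0; c ^+ (2 * q); 0; c ^+ q * (a ^+ q + c ^+ q * w) / wq];
    [:: a * b; a ^+ q * b ^+ q; 1; c ^+ q * d ^+ q; c * d;
        d * (a + c * wq) / w + d ^+ q * (a ^+ q + c ^+ q * w) / wq + 1 / w ^+ q.+1];
    [:: 0; b ^+ (2 * q); 0; d ^+ (2 * q); 0; (d ^+ q * (b ^+ q + d ^+ q * w) + w) / wq];
    [:: b ^+ 2; 0; 0; 0; d ^+ 2; (d * (b + d * wq) + wq) / w];
    [:: 0; 0; 0; 0; 0; 1]] i) j.

Definition Grel (x y : 'cV[F]_6) : Prop :=
  exists a b c d : F, a * d + b * c = 1 /\ peq (Mabcd a b c d *m x) y.

Definition setN (y : 'cV[F]_6) : Prop := peq Npt y.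
Definition setQ (y : 'cV[F]_6) : Prop := inQ y.
Definition setRest (y : 'cV[F]_6) : Prop := inPi y /\ ~ inQ y /\ ~ peq Npt y.

End Defs.

From HB Require Import structures.
From mathcomp Require Import all_boot all_order all_algebra all_field.
From mathcomp Require Import ring.
Set Implicit Arguments. Unset Strict Implicit. Unset Printing Implicit Defensive.
Import GRing.Theory.
Local Open Scope ring_scope.

(* A point of Pi is written (a, a^q, d, b, b^q, 0) with d in F_q, i.e. by a triple
   (a, d, b); on such triples M_{a,b,c,d} acts through an action of SL(2, q^2),
   which fixes the nucleus (0, 1, 0) and preserves the form
   Q = d^2 + a b^q + a^q b cutting out the quadric. Conversely, F being perfect, write
   a = x^2 and b = y^2: any matrix with first column (x, y^q) maps (1, e, 0) to
   (a, d, b), where e = d + Tr(x y^q) lies in F_q and e^2 = Q. Hence every point off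
   the nucleus is in the orbit of (1, 0, 0) when Q vanishes, and otherwise, after a
   diagonal rescaling, in the orbit of (1, 1, 0). *)

Section FrobeniusPower.
Variables (R : comNzRingType) (p n : nat).

(* The unused characteristic proof only keys the ring-morphism instance, as for
   [pFrobenius_aut]. *)
Definition frobenius_pow (_ : p \in [pchar R]) (x : R) := x ^+ (p ^ n).

Variable charRp : p \in [pchar R].

Lemma frobenius_pow_is_nmod_morphism : nmod_morphism (frobenius_pow charRp).
Proof.
have p_gt0 := prime_gt0 (pcharf_prime charRp).
split=> [|x y]; rewrite /frobenius_pow; first by rewrite expr0n expn_eq0 eqn0Ngt p_gt0.
by apply: exprDn_pchar; rewrite pnatX (pnatE _ (pcharf_prime charRp)) charRp.
Qed.

Lemma frobenius_pow_is_monoid_morphism : monoid_morphism (frobenius_pow charRp).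
Proof. by split=> [|x y]; rewrite /frobenius_pow ?expr1n ?exprMn. Qed.

HB.instance Definition _ := GRing.isNmodMorphism.Build R R (frobenius_pow charRp)
  frobenius_pow_is_nmod_morphism.
HB.instance Definition _ := GRing.isMonoidMorphism.Build R R (frobenius_pow charRp)
  frobenius_pow_is_monoid_morphism.

End FrobeniusPower.

Section TripleAction.
Variables (F : fieldType) (sigma : {rmorphism F -> F}).
Hypotheses (sigmaK : involutive sigma) (char2 : 2 = 0 :> F).

Record triple := Triple { alpha : F; delta : F; beta : F }.

Definition tscale (l : F) (t : triple) :=
  Triple (l * alpha t) (l * delta t) (l * beta t).

Definition trace (x : F) := x + sigma x.

Definition act (a b c d : F) (t : triple) : triple :=
  Triple (a ^+ 2 * alpha t + c ^+ 2 * sigma (beta t))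
         (delta t + trace (a * b * alpha t) + trace (c * d * sigma (beta t)))
         (sigma b ^+ 2 * sigma (alpha t) + sigma d ^+ 2 * beta t).

Definition qform (t : triple) :=
  delta t ^+ 2 + alpha t * sigma (beta t) + sigma (alpha t) * beta t.

Definition nuclear (t : triple) := (alpha t == 0) && (beta t == 0).

Definition pi_triple (t : triple) := sigma (delta t) = delta t /\ t <> Triple 0 0 0.

Lemma addrr_char2 (x : F) : x + x = 0.
Proof. by rewrite -mulr2n -mulr_natl char2 mul0r. Qed.

Lemma addr_eq1_char2 (x y : F) : x + y = 1 -> x = 1 + y.
Proof. by move=> <-; rewrite -addrA addrr_char2 addr0. Qed.

Lemma sigma_trace x : sigma (trace x) = trace x.
Proof. by rewrite rmorphD sigmaK addrC. Qed.

(* [act a b c d] is the action of the matrix [[a, c], [b, d]]. *)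
Lemma act_comp a b c d a' b' c' d' t : a' * d' + b' * c' = 1 ->
  act a' b' c' d' (act a b c d t) =
  act (a' * a + c' * b) (b' * a + d' * b) (a' * c + c' * d) (b' * c + d' * d) t.
Proof.
move=> /addr_eq1_char2 det'.
have det's : sigma a' * sigma d' = 1 + sigma b' * sigma c'.
  by rewrite -!rmorphM det' rmorphD rmorph1.
case: t => al de be; rewrite /act /trace /=.
by congr Triple; rewrite !(rmorphD, rmorphM, rmorphXn, sigmaK); ring: char2 det' det's.
Qed.

Lemma act1 t : act 1 0 0 1 t = t.
Proof. by case: t => al de be; rewrite /act /trace /= !rmorph0 !rmorph1; congr Triple; ring. Qed.

Lemma actK a b c d t : a * d + b * c = 1 -> act d b c a (act a b c d t) = t.
Proof.
move=> det; rewrite act_comp; last by rewrite mulrC.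
by rewrite (mulrC b) (mulrC d c) !addrr_char2 (mulrC d) (mulrC c) det addrC det act1.
Qed.

Lemma actZ a b c d l t : sigma l = l -> act a b c d (tscale l t) = tscale l (act a b c d t).
Proof.
move=> ll; case: t => al de be; rewrite /act /tscale /trace /=.
by congr Triple; rewrite !(rmorphD, rmorphM, sigmaK) ll; ring.
Qed.

Lemma qform_act a b c d t : a * d + b * c = 1 -> qform (act a b c d t) = qform t.
Proof.
move=> /addr_eq1_char2 det.
have dets : sigma a * sigma d = 1 + sigma b * sigma c.
  by rewrite -!rmorphM det rmorphD rmorph1.
case: t => al de be; rewrite /qform /act /trace /=.
by rewrite !(rmorphD, rmorphM, rmorphXn, sigmaK); ring: char2 det dets.
Qed.

Lemma act_nuclear a b c d e : act a b c d (Triple 0 e 0) = Triple 0 e 0.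
Proof. by rewrite /act /trace /= !rmorph0; congr Triple; ring. Qed.

Lemma act_e1 a b c d e :
  act a b c d (Triple 1 e 0) = Triple (a ^+ 2) (e + trace (a * b)) (sigma b ^+ 2).
Proof. by rewrite /act /trace /= !rmorph0 rmorph1; congr Triple; ring. Qed.

Lemma act_pi_triple a b c d t : a * d + b * c = 1 -> pi_triple t -> pi_triple (act a b c d t).
Proof.
move=> det [de_fixed t_neq0]; split.
  by rewrite /act /= 2!rmorphD !sigma_trace de_fixed.
by move=> t'0; apply: t_neq0; rewrite -(actK t det) t'0 act_nuclear.
Qed.

Lemma nuclearE t : nuclear t -> t = Triple 0 (delta t) 0.
Proof. by case: t => al de be /andP[/eqP /= -> /eqP /= ->]. Qed.

Lemma nuclear_act a b c d t : a * d + b * c = 1 -> nuclear (act a b c d t) = nuclear t.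
Proof.
move=> det; apply/idP/idP => [/nuclearE e | /nuclearE e].
  by rewrite -(actK t det) e act_nuclear /nuclear eqxx.
by rewrite e act_nuclear /nuclear eqxx.
Qed.

Lemma tscaleA l m t : tscale l (tscale m t) = tscale (l * m) t.
Proof. by rewrite /tscale /= !mulrA. Qed.

Lemma tscale1 t : tscale 1 t = t.
Proof. by case: t => al de be; rewrite /tscale /= !mul1r. Qed.

Definition in_orbit r t := exists a b c d l,
  [/\ a * d + b * c = 1, sigma l = l, l != 0 & t = tscale l (act a b c d r)].

Lemma in_orbit_sym r t : in_orbit r t -> in_orbit t r.
Proof.
move=> [a [b [c [d [l [det l_fixed l_neq0 ->]]]]]].
exists d, b, c, a, l^-1; split; rewrite ?invr_eq0 ?fmorphV ?l_fixed //.
  by rewrite mulrC.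
by rewrite actZ // actK // tscaleA mulVf ?tscale1.
Qed.

Lemma in_orbit_trans r s t : in_orbit r s -> in_orbit s t -> in_orbit r t.
Proof.
move=> [a [b [c [d [l [det l_fixed l_neq0 ->]]]]]].
move=> [a' [b' [c' [d' [l' [det' l'_fixed l'_neq0 ->]]]]]].
exists (a' * a + c' * b), (b' * a + d' * b), (a' * c + c' * d), (b' * c + d' * d), (l' * l).
split; rewrite ?mulf_neq0 ?rmorphM ?l_fixed ?l'_fixed //.
  rewrite -[RHS]mulr1 -{1}det -det'; ring: char2.
by rewrite actZ // tscaleA act_comp.
Qed.

Lemma qform_nuclear_neq0 t : pi_triple t -> nuclear t -> qform t != 0.
Proof.
case=> _ t_neq0 /nuclearE e; apply: contra_notN t_neq0 => /eqP.
by rewrite e /qform /= mul0r mulr0 !addr0 => /eqP; rewrite expf_eq0 /= => /eqP ->.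
Qed.

Lemma sl2_completion (a b : F) : (a != 0) || (b != 0) -> exists c d, a * d + b * c = 1.
Proof.
have [-> /= b_neq0 | a_neq0 _] := eqVneq a 0.
  by exists b^-1, 0; rewrite mul0r mulfV // add0r.
by exists 0, a^-1; rewrite mulfV // mulr0 addr0.
Qed.

Hypothesis sqrtF : forall x : F, exists y, y ^+ 2 = x.

Lemma act_e1_onto t : sigma (delta t) = delta t -> ~~ nuclear t ->
  exists a b c d e, [/\ a * d + b * c = 1, sigma e = e, e ^+ 2 = qform t
                      & act a b c d (Triple 1 e 0) = t].
Proof.
case: t => al de be /= de_fixed not_nuclear.
have [x x2] := sqrtF al; have [y y2] := sqrtF be; subst al be.
have [c [d det]] : exists c d, x * d + sigma y * c = 1.
  apply: sl2_completion; apply: contraNT not_nuclear.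
  by rewrite negb_or !negbK fmorph_eq0 /nuclear /= !expf_eq0.
exists x, (sigma y), c, d, (de + trace (x * sigma y)); split => //.
- by rewrite rmorphD sigma_trace de_fixed.
- by rewrite /qform /trace /= !(rmorphD, rmorphM, rmorphXn, sigmaK); ring: char2.
- by rewrite act_e1 sigmaK -addrA addrr_char2 addr0.
Qed.

Lemma in_orbit_isotropic t : pi_triple t -> qform t = 0 -> in_orbit (Triple 1 0 0) t.
Proof.
move=> t_pi Qt0; have not_nuclear : ~~ nuclear t.
  by apply/negP => /(qform_nuclear_neq0 t_pi); rewrite Qt0 eqxx.
have [a [b [c [d [e [det _ e2 <-]]]]]] := act_e1_onto t_pi.1 not_nuclear.
have -> : e = 0 by apply/eqP; rewrite -[_ == _](expf_eq0 _ 2) e2 Qt0.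
by exists a, b, c, d, 1; rewrite rmorph1 oner_neq0 tscale1.
Qed.

Lemma in_orbit_anisotropic t : pi_triple t -> qform t != 0 -> ~~ nuclear t ->
  in_orbit (Triple 1 1 0) t.
Proof.
move=> t_pi Qt_neq0 not_nuclear.
have [a [b [c [d [e [det e_fixed e2 <-]]]]]] := act_e1_onto t_pi.1 not_nuclear.
have e_neq0 : e != 0 by apply: contraNneq Qt_neq0 => e0; rewrite -e2 e0 expr0n.
have [u u2] := sqrtF e^-1.
have u_neq0 : u != 0 by apply: contra_neq (invr_neq0 e_neq0) => u0; rewrite -u2 u0 expr0n.
apply: (in_orbit_trans (s := Triple 1 e 0)).
  exists u, 0, 0, u^-1, e; split => //; first by rewrite mulfV // mulr0 addr0.
  by rewrite act_e1 /tscale /= u2 mulfV // mulr0 /trace !rmorph0 !addr0 mulr1 expr0n mulr0.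
by exists a, b, c, d, 1; rewrite rmorph1 oner_neq0 tscale1.
Qed.

Lemma in_orbit_nuclear t : pi_triple t -> nuclear t -> in_orbit (Triple 0 1 0) t.
Proof.
move=> [de_fixed t_neq0] /nuclearE e.
have de_neq0 : delta t != 0 by apply: contra_notN t_neq0 => /eqP de0; rewrite e de0.
exists 1, 0, 0, 1, (delta t); split => //; first by rewrite mulr1 mulr0 addr0.
by rewrite act1 {1}e /tscale /= mulr0 mulr1.
Qed.

End TripleAction.

Section PiOrbits.
Variables (F : finFieldType) (q : nat) (w : F) (sigma : {rmorphism F -> F}).
Hypotheses (sigmaE : forall x, sigma x = x ^+ q) (sigmaK : involutive sigma)
  (char2 : 2 = 0 :> F) (sqrtF : forall x : F, exists y, y ^+ 2 = x).

Local Notation act := (act sigma).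
Local Notation pi_triple := (pi_triple sigma).
Local Notation in_orbit := (in_orbit sigma).

Definition coords (t : triple F) : 'cV[F]_6 :=
  vec6 [:: alpha t; sigma (alpha t); delta t; beta t; sigma (beta t); 0].

Lemma coordsZ l t : sigma l = l -> coords (tscale l t) = l *: coords t.
Proof.
move=> l_fixed; apply/matrixP => i j; rewrite !mxE.
by case: i => [[|[|[|[|[|[|i]]]]]] Hi] //=; rewrite ?rmorphM ?l_fixed ?mulr0.
Qed.

Lemma coords_eq0 t : coords t = 0 <-> t = Triple 0 0 0.
Proof.
split=> [t0 | ->]; last first.
  by apply/matrixP => i j; rewrite !mxE; case: i => [[|[|[|[|[|[|i]]]]]] Hi] //=; rewrite rmorph0.
have entry i : coords t i 0 = 0 by rewrite t0 mxE.
case: t t0 entry => al de be _ entry.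
by congr Triple; [rewrite -(entry 0) | rewrite -(entry 2%:R) | rewrite -(entry 3%:R)]; rewrite mxE.
Qed.

Lemma Npt_coords : Npt F = coords (Triple 0 1 0).
Proof.
by apply/matrixP => i j; rewrite !mxE; case: i => [[|[|[|[|[|[|i]]]]]] Hi] //=; rewrite rmorph0.
Qed.

Lemma mul_Mabcd_coords a b c d t :
  Mabcd q w a b c d *m coords t = coords (act a b c d t).
Proof.
have sigma2E x : x ^+ (2 * q) = sigma x ^+ 2 by rewrite sigmaE -exprM mulnC.
apply/matrixP => i j; rewrite ord1 !mxE /= !big_ord_recl big_ord0 /= !mxE /=.
case: i => [[|[|[|[|[|[|i]]]]]] Hi] //=; rewrite ?sigma2E -?sigmaE /trace;
  by rewrite ?(rmorphD, rmorphM, rmorphXn, sigmaK); ring: char2.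
Qed.

Lemma inPi_coords x :
  inPi q x <-> exists k t, [/\ k != 0, pi_triple t & x = k *: coords t].
Proof.
split.
- move=> [[x_neq0 [a [b [d0 [d1 [d0_fixed [_ [k [k_neq0 e]]]]]]]]] x5].
  have d10 : d1 = 0.
    by move/(congr1 (fun m : 'cV[F]_6 => m 5%:R 0)): e; rewrite !mxE x5 mulr0.
  have ek : coords (Triple a d0 b) = k *: x by rewrite -e d10 /coords /= !sigmaE.
  exists k^-1, (Triple a d0 b); split; rewrite ?invr_eq0 //.
    split=> [|t0]; first by rewrite /= sigmaE.
    move: ek; rewrite t0 (proj2 (coords_eq0 _) erefl) => /esym/eqP.
    by rewrite scaler_eq0 (negbTE k_neq0) (negbTE x_neq0).
  by rewrite ek scalerA mulVf // scale1r.
- move=> [k [t [k_neq0 [de_fixed t_neq0] ->]]]; split; last by rewrite !mxE mulr0.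
  split; first by rewrite scaler_eq0 (negbTE k_neq0) /=; apply/eqP => /coords_eq0.
  exists (alpha t), (beta t), (delta t), 0.
  split; first by rewrite /inFq -sigmaE.
  split; first by rewrite /inFq -sigmaE rmorph0.
  exists k^-1; split; first by rewrite invr_eq0.
  by rewrite scalerA mulVf // scale1r /coords !sigmaE.
Qed.

Lemma inQ_coords k t : k != 0 -> pi_triple t ->
  inQ q (k *: coords t) <-> qform sigma t = 0.
Proof.
move=> k_neq0 t_pi; have Pi_kt : inPi q (k *: coords t) by apply/inPi_coords; exists k, t.
rewrite /inQ !mxE /=.
have -> : (k * delta t) ^+ 2 + k * alpha t * (k * sigma (beta t)) +
          k * sigma (alpha t) * (k * beta t) = k ^+ 2 * qform sigma t.
  by rewrite /qform; ring.
split=> [[_ /eqP] | ->]; last by rewrite mulr0.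
by rewrite mulf_eq0 expf_eq0 (negbTE k_neq0) /= => /eqP.
Qed.

Lemma setN_coords k t : k != 0 -> pi_triple t ->
  setN (k *: coords t) <-> nuclear t.
Proof.
move=> k_neq0 [de_fixed t_neq0]; split.
- move=> [k' [_ e]].
  have entry i : (k *: coords t) i 0 = k' * Npt F i 0 by rewrite e mxE.
  move: (entry 0) (entry 3%:R); rewrite Npt_coords !mxE /= !mulr0 /nuclear.
  by move=> /eqP; rewrite mulf_eq0 (negbTE k_neq0) /= => -> /eqP; rewrite mulf_eq0 (negbTE k_neq0).
- move=> /nuclearE e.
  have de_neq0 : delta t != 0 by apply: contra_notN t_neq0 => /eqP de0; rewrite e de0.
  exists (k * delta t); split; first by rewrite mulf_neq0.
  by rewrite Npt_coords -scalerA -[delta t *: _]coordsZ // /tscale /= mulr0 mulr1 -e.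
Qed.

Lemma Grel_coords k t y : k != 0 ->
  Grel q w (k *: coords t) y <->
  exists a b c d k', [/\ a * d + b * c = 1, k' != 0 & y = k' *: coords (act a b c d t)].
Proof.
move=> k_neq0; split.
- move=> [a [b [c [d [det [k' [k'_neq0 ->]]]]]]].
  exists a, b, c, d, (k' * k); rewrite mulf_neq0 //.
  by rewrite -scalemxAr mul_Mabcd_coords scalerA.
- move=> [a [b [c [d [k' [det k'_neq0 ->]]]]]].
  exists a, b, c, d; split => //; exists (k' / k); rewrite mulf_neq0 ?invr_eq0 //.
  by rewrite -scalemxAr mul_Mabcd_coords scalerA mulfVK.
Qed.

Lemma Grel_in_orbit k k' t s : k != 0 -> k' != 0 -> in_orbit t s ->
  Grel q w (k *: coords t) (k' *: coords s).
Proof.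
move=> k_neq0 k'_neq0 [a [b [c [d [l [det l_fixed l_neq0 ->]]]]]].
apply/Grel_coords => //; exists a, b, c, d, (k' * l); rewrite mulf_neq0 //.
by rewrite coordsZ // scalerA.
Qed.

Lemma Grel_orbit_class (S : 'cV[F]_6 -> Prop) (P : triple F -> Prop) r :
  (forall x, S x -> inPi q x) ->
  (forall k t, k != 0 -> pi_triple t -> S (k *: coords t) <-> P t) ->
  (forall a b c d t, a * d + b * c = 1 -> pi_triple t -> P t -> P (act a b c d t)) ->
  (forall t, pi_triple t -> P t -> in_orbit r t) ->
  forall x y, S x -> (Grel q w x y <-> S y).
Proof.
move=> S_Pi SP P_act P_orbit x y Sx.
have [k [t [k_neq0 t_pi ex]]] := (inPi_coords x).1 (S_Pi x Sx).
rewrite ex in Sx *; have Pt : P t by apply/(SP k).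
split.
- move/Grel_coords => /(_ k_neq0) [a [b [c [d [k' [det k'_neq0 ->]]]]]].
  have act_pi := act_pi_triple sigmaK char2 det t_pi.
  by apply/SP => //; apply: P_act.
- move=> Sy; have [k2 [s [k2_neq0 s_pi ey]]] := (inPi_coords y).1 (S_Pi y Sy).
  rewrite ey in Sy *; have Ps : P s by apply/(SP k2).
  apply: Grel_in_orbit => //.
  have r_t := P_orbit t t_pi Pt.
  exact: (in_orbit_trans sigmaK char2 (in_orbit_sym sigmaK char2 r_t) (P_orbit s s_pi Ps)).
Qed.

Lemma setRest_coords k t : k != 0 -> pi_triple t ->
  setRest q (k *: coords t) <-> qform sigma t != 0 /\ ~~ nuclear t.
Proof.
move=> k_neq0 t_pi.
have Q_iff := inQ_coords k_neq0 t_pi; have N_iff := setN_coords k_neq0 t_pi.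
split=> [[_ [notQ notN]] | [Qt nt]].
  by split; [apply/eqP => /Q_iff | apply/negP => /N_iff].
split; first by apply/inPi_coords; exists k, t.
by split; [move/Q_iff; apply/eqP | move/N_iff; apply/negP].
Qed.

Lemma Pi_partition (x : 'cV[F]_6) : inPi q x ->
  [\/ setN x, setQ q x | setRest q x]
  /\ ~ (setN x /\ setQ q x) /\ ~ (setN x /\ setRest q x) /\ ~ (setQ q x /\ setRest q x).
Proof.
move=> /inPi_coords [k [t [k_neq0 t_pi ->]]].
have N_iff := setN_coords k_neq0 t_pi; have Q_iff := inQ_coords k_neq0 t_pi.
split.
  have [nt | nt] := boolP (nuclear t); first by constructor 1; apply/N_iff.
  have [Qt | Qt] := eqVneq (qform sigma t) 0; first by constructor 2; apply/Q_iff.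
  by constructor 3; apply/(setRest_coords k_neq0 t_pi).
split; first by move=> [/N_iff nt /Q_iff Qt]; move: (qform_nuclear_neq0 t_pi nt); rewrite Qt eqxx.
by split=> [[hN [_ [_ []]]] | [hQ [_ []]]].
Qed.

Lemma Pi_orbits :
  (forall x : 'cV[F]_6, inPi q x ->
     [\/ setN x, setQ q x | setRest q x]
     /\ ~ (setN x /\ setQ q x) /\ ~ (setN x /\ setRest q x)
     /\ ~ (setQ q x /\ setRest q x)) /\
  inPi q (Npt F) /\ (exists x : 'cV[F]_6, setQ q x) /\ (exists x : 'cV[F]_6, setRest q x) /\
  (forall x y : 'cV[F]_6, setN x -> (Grel q w x y <-> setN y)) /\
  (forall x y : 'cV[F]_6, setQ q x -> (Grel q w x y <-> setQ q y)) /\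
  (forall x y : 'cV[F]_6, setRest q x -> (Grel q w x y <-> setRest q y)).
Proof.
have pi_e1 e : sigma e = e -> pi_triple (Triple 1 e 0).
  by move=> e_fixed; split=> // [[/eqP]]; rewrite oner_eq0.
have pi_N : pi_triple (Triple 0 1 0).
  by split=> [|[/eqP]]; rewrite ?rmorph1 ?oner_eq0.
have N_Pi (x : 'cV[F]_6) : setN x -> inPi q x.
  by move=> [k [k_neq0 ->]]; apply/inPi_coords; exists k, (Triple 0 1 0); rewrite Npt_coords.
split; first exact: Pi_partition.
split; first by apply: N_Pi; exists 1; rewrite oner_neq0 scale1r.
split.
  exists (1 *: coords (Triple 1 0 0)).
  apply/(inQ_coords (oner_neq0 _) (pi_e1 0 (rmorph0 _))).
  by rewrite /qform /= rmorph0 rmorph1 expr0n !mulr0 !addr0.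
split.
  exists (1 *: coords (Triple 1 1 0)).
  apply/(setRest_coords (oner_neq0 _) (pi_e1 1 (rmorph1 _))).
  by split; rewrite /qform /nuclear /= ?rmorph0 ?expr1n ?mulr0 ?addr0 ?oner_eq0.
split.
  apply: (Grel_orbit_class (P := fun t => nuclear t) (r := Triple 0 1 0)) => //.
  - by move=> k t; apply: setN_coords.
  - by move=> a b c d t det _; rewrite nuclear_act.
  - exact: in_orbit_nuclear.
split.
  apply: (Grel_orbit_class (P := fun t => qform sigma t = 0) (r := Triple 1 0 0)) => //.
  - by move=> x [].
  - by move=> k t; apply: inQ_coords.
  - by move=> a b c d t det _; rewrite qform_act.
  - exact: in_orbit_isotropic.
apply: (Grel_orbit_class (P := fun t => qform sigma t != 0 /\ ~~ nuclear t) (r := Triple 1 1 0)).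
- by move=> x [].
- by move=> k t; apply: setRest_coords.
- by move=> a b c d t det _; rewrite qform_act ?nuclear_act.
- by move=> t t_pi []; apply: in_orbit_anisotropic.
Qed.

End PiOrbits.

Theorem mainTheorem13 (F : finFieldType) (h q : nat) (w : F) :
  (0 < h)%N -> q = (2 ^ h)%N -> #|F| = (q ^ 2)%N ->
  w ^+ q != w -> w + w ^+ q = 1 ->
  (forall x : 'cV[F]_6, inPi q x ->
     [\/ setN x, setQ q x | setRest q x]
     /\ ~ (setN x /\ setQ q x) /\ ~ (setN x /\ setRest q x)
     /\ ~ (setQ q x /\ setRest q x)) /\
  inPi q (Npt F) /\ (exists x : 'cV[F]_6, setQ q x) /\ (exists x : 'cV[F]_6, setRest q x) /\
  (forall x y : 'cV[F]_6, setN x -> (Grel q w x y <-> setN y)) /\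
  (forall x y : 'cV[F]_6, setQ q x -> (Grel q w x y <-> setQ q y)) /\
  (forall x y : 'cV[F]_6, setRest q x -> (Grel q w x y <-> setRest q y)).
Proof.
(* omega only occurs in the last column of M, which is never seen by points of Pi *)
move=> h_gt0 q_def cardF _ _.
have cardF2 : #|F| = (2 ^ (h * 2))%N by rewrite cardF q_def expnM.
have charF2 : 2 \in [pchar F] := card_finPcharP cardF2 (isT : prime 2).
apply: (@Pi_orbits F q w (frobenius_pow h charF2)).
- by move=> x; rewrite q_def.
- move=> x; change (x ^+ (2 ^ h) ^+ (2 ^ h) = x).
  by rewrite -exprM -q_def mulnn -cardF expf_card.
- exact: pcharf0 charF2.
- move=> x; exists (x ^+ (2 ^ (h * 2).-1)).
  by rewrite -exprM -expnSr prednK ?muln_gt0 ?h_gt0 // -cardF2 expf_card.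
Qed.
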